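(* Let $\beta>0$. For any positive integers $k,m$ there exists $M_{k,m}\in\mathbb{R}$ such that for all positive integers $i_1,\dots,i_k$, \[ \mathbb{E}\left[\frac{\Delta(H_{mi_1})}{(mi_1)^{1/(2+\beta)}}\cdots\frac{\Delta(H_{mi_k})}{(mi_k)^{1/(2+\beta)}}\right]\le M_{k,m}, \] where $\Delta(G)$ denotes the maximum degree of $G$.
   Context: Fix a real $\beta>0$ and a positive integer $m$. The random tree process $(G^n_{1,\beta})_{n\ge1}$ is defined as follows. $G^1_{1,\beta}$ consists of a single vertex $v_1$ and no edges. Given $G^n_{1,\beta}$ with vertices $v_1,\dots,v_n$ and directed edges $e_2,\dots,e_n$ (where $e_i$ is the edge whose tail is $v_i$), $G^{n+1}_{1,\beta}$ is obtained by adding a vertex $v_{n+1}$ and a directed edge $e_{n+1}$ with tail $v_{n+1}$ and head a ''target vertex'' determined by a random variable $f_{n+1}$, independent of $f_2,\dots,f_n$, taking values in $\Omega_{n+1}=\{(i,v):1\le i\le n\}\cup\{(i,h),(i,t):2\le i\le n\}$ with $\Pr(f_{n+1}=(i,v))=\beta/((2+\beta)n-2)$ and $\Pr(f_{n+1}=(i,h))=\Pr(f_{n+1}=(i,t))=1/((2+\beta)n-2)$. If $f_{n+1}=(i,v)$ the target is $v_i$ (chosen ''uniformly''); if $f_{n+1}=(i,h)$ the target is the head of $e_i$, and if $f_{n+1}=(i,t)$ the target is the tail $v_i$ of $e_i$ (chosen ''preferentially'', by copying the head half-edge, resp. tail half-edge, of $e_i$). Consequently the target is $v_i$ with probability $(d_n(v_i)+\beta)/((2+\beta)n-2)$,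 where $d_n(v)$ is the degree of $v$ in $G^n_{1,\beta}$. Each edge is regarded as two half-edges, one at each endpoint; the degree of a vertex is the number of half-edges at it (loops count twice). For $t\ge1$, $H_t$ is the undirected multigraph formed from $G^t_{1,\beta}$ by identifying, for each $j<\lceil t/m\rceil$, the vertices $v_{(j-1)m+1},\dots,v_{jm}$ into one vertex $w_j$, and identifying the remaining vertices into one vertex $w_{\lceil t/m\rceil}$ (all edges kept). Known input (M\'ori): for any positive integer $k$ there exists $\tilde M_k$ such that for all $n$, $\mathbb{E}\big[\big((\Delta(G^n_{1,\beta})+\beta)/n^{1/(2+\beta)}\big)^k\big]\le\tilde M_k$. *)

From Stdlib Require Export Reals List Arith.
Export ListNotations.
Open Scope R_scope.

(* A value of f_{n+1} in Omega_{n+1}: (i,v), (i,h) or (i,t). *)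
Inductive choice : Type := CV (i : nat) | CH (i : nat) | CT (i : nat).

(* A realisation of f_2, ..., f_t is a list cs with  nth (j-2) cs = f_j.
   Vertices are v_1, v_2, ... indexed by positive naturals. *)
Definition f_at (cs : list choice) (j : nat) : choice := nth (j - 2) cs (CV 0).

(* Index of the head of edge e_j (j >= 2); fuel j suffices since f_j refers to i < j. *)
Fixpoint head_aux (fuel : nat) (cs : list choice) (j : nat) : nat :=
  match fuel with
  | O => O
  | S f => match f_at cs j with
           | CV i => i
           | CT i => i
           | CH i => head_aux f cs i
           end
  end.
Definition head (cs : list choice) (j : nat) : nat := head_aux j cs j.

Definition nsum (l : list nat) : nat := fold_right Nat.add 0%nat l.
Definition nmax (l : list nat) : nat := fold_right Nat.max 0%nat l.
Definition ind (b : bool) : nat := if b then 1%nat else 0%nat.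

(* Degree of v in G^n: half-edges at v (edge e_j has tail v_j and head v_{head j}). *)
Definition degG (cs : list choice) (n v : nat) : nat :=
  nsum (map (fun j => (ind (Nat.eqb j v) + ind (Nat.eqb (head cs j) v))%nat)
            (seq 2 (n - 1))).
Definition DeltaG (cs : list choice) (n : nat) : nat :=
  nmax (map (degG cs n) (seq 1 n)).

(* H_t: vertex v_v (1 <= v <= t) is identified into w_{ceil(v/m)}; for v <= t
   this is exactly the description (blocks of m, remainder into w_{ceil(t/m)}). *)
Definition block (m v : nat) : nat := ((v - 1) / m + 1)%nat.
Definition nblocks (m t : nat) : nat := ((t + m - 1) / m)%nat.
Definition degH (cs : list choice) (m t b : nat) : nat :=
  nsum (map (fun j => (ind (Nat.eqb (block m j) b) + ind (Nat.eqb (block m (head cs j)) b))%nat)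
            (seq 2 (t - 1))).
Definition DeltaH (cs : list choice) (m t : nat) : nat :=
  nmax (map (degH cs m t) (seq 1 (nblocks m t))).

(* Law of f_{n+1} when G^n has n vertices. *)
Definition options (beta : R) (n : nat) : list (choice * R) :=
  let D := (2 + beta) * INR n - 2 in
  map (fun i => (CV i, beta / D)) (seq 1 n) ++
  map (fun i => (CH i, 1 / D)) (seq 2 (n - 1)) ++
  map (fun i => (CT i, 1 / D)) (seq 2 (n - 1)).

Definition rsum (l : list R) : R := fold_right Rplus 0 l.
Definition rprod (l : list R) : R := fold_right Rmult 1 l.

Fixpoint expect_aux (beta : R) (k : nat) (pre : list choice)
         (F : list choice -> R) : R :=
  match k with
  | O => F pre
  | S k' => rsum (map (fun cp => snd cp * expect_aux beta k' (pre ++ [fst cp]) F)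
                      (options beta (S (length pre))))
  end.

Definition expectG (beta : R) (t : nat) (F : list choice -> R) : R :=
  expect_aux beta (t - 1) [] F.

From Pilot Require Import Defs.
From Stdlib Require Import Reals List Arith Lia Lra.

(* The argument has a deterministic part and a probabilistic part.
   - Deterministic: every vertex w_b of H_t is the merge of at most m vertices
     of G^t, and its degree is the sum of their degrees, so
     Delta(H_t) <= m * Delta(G^t) (lemma [DeltaH_le]).  For nonnegative
     reals y_1..y_k, y_1 * ... * y_k <= max_j y_j^k <= sum_j y_j^k
     (lemma [rprod_le_sum_pow]).  Together they bound the product in the
     statement, pointwise, by m^k * sum_i Y_{m i}^k where
     Y_t = (Delta(G^t) + beta) / t^(1/(2+beta)) ([product_le_moment_sum]).
   - Probabilistic: the expectation operator [expect_aux] is linear and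
     monotone, and a functional of G^t has the same expectation whether the
     process is run up to time t or to any later time T ([expectG_marginal]).
   Hence the expectation in the statement is at most m^k * k * M_k, with M_k
   the constant of Mori's moment bound. *)

Definition choice_ok (p : nat) (c : choice) : Prop :=
  match c with
  | CV i => (1 <= i <= p + 1)%nat
  | CH i => (2 <= i <= p + 1)%nat
  | CT i => (2 <= i <= p + 1)%nat
  end.

Definition valid (cs : list choice) : Prop :=
  forall p, (p < length cs)%nat -> choice_ok p (nth p cs (CV 0)).

Lemma valid_nil : valid [].
Proof. intros p H; simpl in H; lia. Qed.

Lemma valid_snoc cs c : valid cs -> choice_ok (length cs) c -> valid (cs ++ [c]).
Proof.
  intros Hv Hc p Hp. rewrite length_app in Hp; simpl in Hp.
  destruct (Nat.eq_dec p (length cs)) as [->|Hne].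
  - rewrite app_nth2 by lia. rewrite Nat.sub_diag. exact Hc.
  - rewrite app_nth1 by lia. apply Hv; lia.
Qed.

Lemma head_aux_app fuel cs e j : valid cs -> (2 <= j <= length cs + 1)%nat ->
  head_aux fuel (cs ++ e) j = head_aux fuel cs j.
Proof.
  revert j. induction fuel as [|f IH]; intros j Hv Hj; cbn [head_aux]; [reflexivity|].
  unfold f_at. rewrite app_nth1 by lia.
  pose proof (Hv (j - 2)%nat ltac:(lia)) as Hok.
  destruct (nth (j - 2) cs (CV 0)) as [i|i|i]; simpl in Hok; try reflexivity.
  apply IH; [exact Hv | lia].
Qed.

Lemma head_aux_range fuel cs j : valid cs -> (2 <= j <= length cs + 1)%nat ->
  (j <= fuel)%nat -> (1 <= head_aux fuel cs j <= j - 1)%nat.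
Proof.
  revert j. induction fuel as [|f IH]; intros j Hv Hj Hf; [lia|]. cbn [head_aux].
  unfold f_at. pose proof (Hv (j - 2)%nat ltac:(lia)) as Hok.
  destruct (nth (j - 2) cs (CV 0)) as [i|i|i]; simpl in Hok; try lia.
  pose proof (IH i Hv ltac:(lia) ltac:(lia)). lia.
Qed.

Lemma DeltaG_app cs e t : valid cs -> (t <= length cs + 1)%nat ->
  DeltaG (cs ++ e) t = DeltaG cs t.
Proof.
  intros Hv Ht. unfold DeltaG. f_equal. apply map_ext. intro v. unfold degG. f_equal.
  apply map_ext_in. intros j Hj. apply in_seq in Hj. unfold Defs.head.
  rewrite head_aux_app; auto; lia.
Qed.

Lemma nsum_map_add {A} (f g : A -> nat) l :
  nsum (map (fun x => f x + g x)%nat l) = (nsum (map f l) + nsum (map g l))%nat.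
Proof. induction l; simpl; [reflexivity|]. rewrite IHl. lia. Qed.

Lemma nsum_map_mul {A} c (f : A -> nat) l :
  nsum (map (fun x => c * f x)%nat l) = (c * nsum (map f l))%nat.
Proof. induction l; simpl; [lia|]. rewrite IHl. lia. Qed.

Lemma nsum_swap {A B} (F : A -> B -> nat) la lb :
  nsum (map (fun a => nsum (map (fun b => F a b) lb)) la) =
  nsum (map (fun b => nsum (map (fun a => F a b) la)) lb).
Proof.
  induction la as [|a la IH]; simpl.
  - induction lb; simpl; lia.
  - rewrite IH, <- nsum_map_add. reflexivity.
Qed.

Lemma nsum_le {A} (f g : A -> nat) l : (forall x, In x l -> f x <= g x)%nat ->
  (nsum (map f l) <= nsum (map g l))%nat.
Proof.
  induction l; simpl; intros H; [lia|].
  pose proof (H a (or_introl eq_refl)). pose proof (IHl (fun x Hx => H x (or_intror Hx))). lia.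
Qed.

Lemma nmax_le l c : (forall x, In x l -> x <= c)%nat -> (nmax l <= c)%nat.
Proof.
  induction l; simpl; intros H; [lia|].
  pose proof (H a (or_introl eq_refl)). pose proof (IHl (fun x Hx => H x (or_intror Hx))). lia.
Qed.

Lemma nmax_ge l x : In x l -> (x <= nmax l)%nat.
Proof.
  induction l; simpl; intros H; [easy|].
  destruct H as [->|H]; [lia|]. specialize (IHl H); lia.
Qed.

Lemma nsum_delta (f : nat -> nat) l x : NoDup l -> In x l ->
  nsum (map (fun v => f v * Defs.ind (Nat.eqb x v)) l)%nat = f x.
Proof.
  induction l as [|a l IH]; simpl; intros Hn H; [easy|].
  inversion Hn as [|? ? Hnotin Hn']; subst.
  destruct (Nat.eqb_spec x a) as [->|Hxa]; simpl.
  - assert (Hz : nsum (map (fun v => f v * Defs.ind (Nat.eqb a v)) l)%nat = 0%nat).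
    { clear IH Hn Hn' H. induction l as [|b l IHl]; simpl; [reflexivity|].
      destruct (Nat.eqb_spec a b); [exfalso; apply Hnotin; simpl; auto|].
      simpl. rewrite IHl; [lia | intro; apply Hnotin; simpl; auto]. }
    rewrite Hz. lia.
  - rewrite IH; auto; [lia|]. destruct H; [congruence | auto].
Qed.

Lemma nsum_ind_filter {A} (P : A -> bool) l :
  nsum (map (fun x => Defs.ind (P x)) l) = length (filter P l).
Proof. induction l; simpl; [reflexivity|]. destruct (P a); simpl; lia. Qed.

Lemma count_block m t b : (0 < m)%nat ->
  (nsum (map (fun v => Defs.ind (Nat.eqb (block m v) b)) (seq 1 t)) <= m)%nat.
Proof.
  intros Hm. rewrite nsum_ind_filter.
  eapply Nat.le_trans; [|apply Nat.eq_le_incl, (length_seq m ((b - 1) * m + 1))].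
  apply NoDup_incl_length; [apply NoDup_filter, seq_NoDup|].
  intros x Hx. apply filter_In in Hx. destruct Hx as [Hx Hb].
  apply in_seq in Hx. apply Nat.eqb_eq in Hb. apply in_seq. unfold block in Hb.
  pose proof (Nat.div_mod_eq (x - 1) m). pose proof (Nat.mod_upper_bound (x - 1) m ltac:(lia)).
  set (q := ((x - 1) / m)%nat) in *. set (r := ((x - 1) mod m)%nat) in *.
  subst b. replace (q + 1 - 1)%nat with q by lia. nia.
Qed.

Lemma degH_block_sum cs m t b : valid cs -> (t <= length cs + 1)%nat ->
  degH cs m t b =
  nsum (map (fun v => Defs.ind (Nat.eqb (block m v) b) * degG cs t v) (seq 1 t))%nat.
Proof.
  intros Hv Ht. set (g := fun x => Defs.ind (Nat.eqb (block m x) b)).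
  assert (Hg : forall x, (1 <= x <= t)%nat ->
            g x = nsum (map (fun v => g v * Defs.ind (Nat.eqb x v)) (seq 1 t))%nat).
  { intros x Hx. symmetry. apply nsum_delta; [apply seq_NoDup | apply in_seq; lia]. }
  unfold degG. rewrite (map_ext _ _ (fun v => eq_sym (nsum_map_mul (g v) _ _))).
  rewrite <- nsum_swap. unfold degH. f_equal. apply map_ext_in. intros j Hj.
  apply in_seq in Hj.
  pose proof (head_aux_range j cs j Hv ltac:(lia) ltac:(lia)).
  change (g j + g (Defs.head cs j) = nsum (map (fun v => g v * (Defs.ind (Nat.eqb j v) +
      Defs.ind (Nat.eqb (Defs.head cs j) v))) (seq 1 t)))%nat.
  rewrite (Hg j), (Hg (Defs.head cs j)) by (unfold Defs.head; lia).
  rewrite <- nsum_map_add. f_equal. apply map_ext. intros; lia.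
Qed.

Lemma DeltaH_le cs m t : (0 < m)%nat -> valid cs -> (t <= length cs + 1)%nat ->
  (DeltaH cs m t <= m * DeltaG cs t)%nat.
Proof.
  intros Hm Hv Ht. unfold DeltaH. apply nmax_le. intros x Hx. apply in_map_iff in Hx.
  destruct Hx as [b [<- _]]. rewrite degH_block_sum by auto.
  eapply Nat.le_trans.
  - apply (nsum_le _ (fun v => DeltaG cs t * Defs.ind (Nat.eqb (block m v) b))%nat).
    intros v Hin. rewrite Nat.mul_comm. apply Nat.mul_le_mono_r.
    unfold DeltaG. apply nmax_ge, in_map, Hin.
  - rewrite nsum_map_mul, Nat.mul_comm. apply Nat.mul_le_mono_r, count_block, Hm.
Qed.

Lemma rsum_app l1 l2 : rsum (l1 ++ l2) = rsum l1 + rsum l2.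
Proof. induction l1; simpl; [ring|]. rewrite IHl1; ring. Qed.

Lemma rsum_map_add {A} (f g : A -> R) l :
  rsum (map (fun x => f x + g x) l) = rsum (map f l) + rsum (map g l).
Proof. induction l; simpl; [ring|]. rewrite IHl; ring. Qed.

Lemma rsum_map_scal {A} c (f : A -> R) l :
  rsum (map (fun x => c * f x) l) = c * rsum (map f l).
Proof. induction l; simpl; [ring|]. rewrite IHl; ring. Qed.

Lemma rsum_le_in {A} (f g : A -> R) l : (forall x, In x l -> f x <= g x) ->
  rsum (map f l) <= rsum (map g l).
Proof.
  induction l; simpl; intros H; [lra|].
  pose proof (H a (or_introl eq_refl)). pose proof (IHl (fun x Hx => H x (or_intror Hx))). lra.
Qed.

Lemma rsum_le_const {A} (f : A -> R) l M : (forall x, In x l -> f x <= M) ->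
  rsum (map f l) <= INR (length l) * M.
Proof.
  intros H. induction l as [|a l IH]; cbn [map rsum fold_right length]; [simpl; lra|].
  rewrite S_INR. unfold rsum in IH. pose proof (H a (or_introl eq_refl)).
  pose proof (IH (fun x Hx => H x (or_intror Hx))). lra.
Qed.

Lemma rsum_snd_const {A} (h : nat -> A) (a : R) l :
  rsum (map snd (map (fun i => (h i, a)) l)) = INR (length l) * a.
Proof.
  induction l; cbn [map rsum fold_right snd length]; [simpl; ring|].
  unfold rsum in *. rewrite IHl, S_INR. ring.
Qed.

Lemma rprod_nonneg l : Forall (fun y => 0 <= y) l -> 0 <= rprod l.
Proof. induction 1; simpl; [lra|]. apply Rmult_le_pos; auto. Qed.

Lemma rprod_le {A} (f g : A -> R) l : (forall x, In x l -> 0 <= f x <= g x) ->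
  rprod (map f l) <= rprod (map g l).
Proof.
  induction l; simpl; intros H; [lra|].
  assert (H' : forall x, In x l -> 0 <= f x <= g x) by auto.
  pose proof (H a (or_introl eq_refl)).
  apply Rmult_le_compat; try lra; auto.
  apply rprod_nonneg, Forall_forall. intros y Hy. apply in_map_iff in Hy.
  destruct Hy as [x [<- Hx]]. apply H'; auto.
Qed.

Lemma rprod_scal {A} c (f : A -> R) l :
  rprod (map (fun x => c * f x) l) = c ^ length l * rprod (map f l).
Proof. induction l; simpl; [ring|]. rewrite IHl; ring. Qed.

Definition rmax_list (l : list R) : R := fold_right Rmax 0 l.

Lemma rmx_nonneg l : 0 <= rmax_list l.
Proof. induction l; simpl; [lra|]. eapply Rle_trans; [apply IHl | apply Rmax_r]. Qed.

Lemma rprod_le_max l : Forall (fun y => 0 <= y) l -> rprod l <= rmax_list l ^ length l.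
Proof.
  induction 1; simpl; [lra|].
  apply Rmult_le_compat; auto.
  - apply rprod_nonneg; auto.
  - apply Rmax_l.
  - eapply Rle_trans; [apply IHForall|]. apply pow_incr. split; [apply rmx_nonneg | apply Rmax_r].
Qed.

Lemma max_pow_le l n : (1 <= n)%nat -> Forall (fun y => 0 <= y) l ->
  rmax_list l ^ n <= rsum (map (fun y => y ^ n) l).
Proof.
  intros Hn. induction 1; simpl.
  - rewrite pow_i by lia. lra.
  - assert (0 <= rsum (map (fun y => y ^ n) l)).
    { eapply Rle_trans; [|apply IHForall]. apply pow_le, rmx_nonneg. }
    assert (0 <= x ^ n) by (apply pow_le; auto).
    unfold Rmax. destruct (Rle_dec x (rmax_list l)); fold (rmax_list l); lra.
Qed.

Lemma rprod_le_sum_pow l : l <> [] -> Forall (fun y => 0 <= y) l ->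
  rprod l <= rsum (map (fun y => y ^ length l) l).
Proof.
  intros Hne Hpos. eapply Rle_trans; [apply rprod_le_max, Hpos|].
  apply max_pow_le; [destruct l; [congruence | simpl; lia] | exact Hpos].
Qed.

Section Expectation.
Variable beta : R.
Hypothesis beta_pos : 0 < beta.

Notation E := (expect_aux beta).

Lemma normaliser_pos n : 0 < (2 + beta) * INR (S n) - 2.
Proof. rewrite S_INR. pose proof (pos_INR n). nra. Qed.

Lemma options_valid pre cp : valid pre -> In cp (options beta (S (length pre))) ->
  valid (pre ++ [fst cp]).
Proof.
  intros Hv Hin. apply valid_snoc; auto. unfold options in Hin.
  rewrite !in_app_iff in Hin.
  destruct Hin as [H1|[H1|H1]]; apply in_map_iff in H1; destruct H1 as [i [<- Hi]];
    apply in_seq in Hi; simpl; lia.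
Qed.

Lemma options_nonneg n cp : In cp (options beta (S n)) -> 0 <= snd cp.
Proof.
  intros Hin. pose proof (normaliser_pos n). unfold options in Hin.
  rewrite !in_app_iff in Hin.
  destruct Hin as [H1|[H1|H1]]; apply in_map_iff in H1; destruct H1 as [i [<- Hi]];
    cbn [snd]; unfold Rdiv; apply Rmult_le_pos; try lra;
    left; apply Rinv_0_lt_compat; lra.
Qed.

Lemma options_mass n : rsum (map snd (options beta (S n))) = 1.
Proof.
  pose proof (normaliser_pos n). unfold options.
  rewrite !map_app, !rsum_app, !rsum_snd_const, !length_seq.
  replace (S n - 1)%nat with n by lia. rewrite S_INR in *. field. lra.
Qed.

Lemma E_split a b pre F : E (a + b) pre F = E a pre (fun cs => E b cs F).
Proof.
  revert pre; induction a; intros pre; cbn [expect_aux Nat.add]; [reflexivity|].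
  f_equal. apply map_ext. intros cp. rewrite IHa. reflexivity.
Qed.

Lemma E_add b pre F G : E b pre (fun cs => F cs + G cs) = E b pre F + E b pre G.
Proof.
  revert pre; induction b; intros pre; cbn [expect_aux]; [reflexivity|].
  rewrite <- rsum_map_add. f_equal. apply map_ext. intros cp. rewrite IHb. ring.
Qed.

Lemma E_scal b pre c F : E b pre (fun cs => c * F cs) = c * E b pre F.
Proof.
  revert pre; induction b; intros pre; cbn [expect_aux]; [reflexivity|].
  rewrite <- rsum_map_scal. f_equal. apply map_ext. intros cp. rewrite IHb. ring.
Qed.

Lemma E_zero b pre : E b pre (fun _ => 0) = 0.
Proof.
  revert pre; induction b; intros pre; cbn [expect_aux]; [reflexivity|].
  induction (options beta (S (length pre))) as [|cp l IH]; simpl; [reflexivity|].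
  rewrite IHb, IH. ring.
Qed.

Lemma E_sum {A} b pre (F : A -> list choice -> R) l :
  E b pre (fun cs => rsum (map (fun i => F i cs) l)) = rsum (map (fun i => E b pre (F i)) l).
Proof.
  induction l as [|a l IH]; simpl.
  - apply E_zero.
  - rewrite <- IH. apply (E_add b pre (F a) (fun cs => rsum (map (fun i => F i cs) l))).
Qed.

Lemma E_mono b pre F G : valid pre ->
  (forall cs, valid cs -> length cs = (length pre + b)%nat -> F cs <= G cs) ->
  E b pre F <= E b pre G.
Proof.
  revert pre; induction b; intros pre Hv H; cbn [expect_aux].
  - apply H; auto; lia.
  - apply rsum_le_in. intros cp Hin.
    apply Rmult_le_compat_l; [eapply options_nonneg; eauto|].
    apply IHb; [eapply options_valid; eauto|]. intros cs Hcs Hl. apply H; auto.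
    rewrite Hl, length_app; simpl; lia.
Qed.

Lemma E_ext_valid b pre F G : valid pre ->
  (forall cs, valid cs -> length cs = (length pre + b)%nat -> F cs = G cs) ->
  E b pre F = E b pre G.
Proof.
  intros Hv H. apply Rle_antisym; apply E_mono; auto; intros cs Hcs Hl;
    rewrite (H cs Hcs Hl); apply Rle_refl.
Qed.

Lemma E_const b pre F L : valid pre -> (L <= length pre)%nat ->
  (forall cs c, valid cs -> (L <= length cs)%nat -> F (cs ++ [c]) = F cs) ->
  E b pre F = F pre.
Proof.
  revert pre; induction b; intros pre Hv HL Hst; cbn [expect_aux]; [reflexivity|].
  transitivity (rsum (map (fun cp => F pre * snd cp) (options beta (S (length pre))))).
  - f_equal. apply map_ext_in. intros cp Hin. rewrite IHb, Hst; auto; [ring| |].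
    + eapply options_valid; eauto.
    + rewrite length_app; simpl; lia.
  - rewrite rsum_map_scal, options_mass. ring.
Qed.

Lemma expectG_marginal T t G : (1 <= t <= T)%nat ->
  (forall cs c, valid cs -> (t - 1 <= length cs)%nat -> G (cs ++ [c]) = G cs) ->
  expectG beta T G = expectG beta t G.
Proof.
  intros Ht Hst. unfold expectG.
  replace (T - 1)%nat with ((t - 1) + (T - t))%nat by lia. rewrite E_split.
  apply E_ext_valid; [apply valid_nil|]. intros cs Hv Hl; simpl in Hl.
  apply (E_const _ _ _ (t - 1)%nat); auto; lia.
Qed.

End Expectation.

Definition scaled_maxdeg (beta : R) (t : nat) (cs : list choice) : R :=
  (INR (DeltaG cs t) + beta) / Rpower (INR t) (1 / (2 + beta)).

Lemma scaled_maxdeg_nonneg beta t cs : 0 <= beta -> 0 <= scaled_maxdeg beta t cs.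
Proof.
  intros Hb. unfold scaled_maxdeg, Rdiv, Rpower. apply Rmult_le_pos.
  - pose proof (pos_INR (DeltaG cs t)); lra.
  - left; apply Rinv_0_lt_compat, exp_pos.
Qed.

Lemma moment_marginal beta (hbeta : 0 < beta) k T t : (1 <= t <= T)%nat ->
  expectG beta T (fun cs => scaled_maxdeg beta t cs ^ k) =
  expectG beta t (fun cs => scaled_maxdeg beta t cs ^ k).
Proof.
  intros Ht. apply expectG_marginal; auto.
  intros cs c Hv Hl. unfold scaled_maxdeg. rewrite DeltaG_app; auto; lia.
Qed.

Lemma product_le_moment_sum beta m (is : list nat) cs :
  0 <= beta -> (0 < m)%nat -> is <> [] -> valid cs ->
  (forall i, In i is -> (1 <= m * i <= length cs + 1)%nat) ->
  rprod (map (fun i => INR (DeltaH cs m (m * i)) /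
                       Rpower (INR (m * i)) (1 / (2 + beta))) is)
  <= INR m ^ length is *
     rsum (map (fun i => scaled_maxdeg beta (m * i) cs ^ length is) is).
Proof.
  intros Hb Hm Hne Hv Hrange.
  eapply Rle_trans.
  { apply (rprod_le _ (fun i => INR m * scaled_maxdeg beta (m * i) cs)).
    intros i Hi. specialize (Hrange i Hi).
    pose proof (exp_pos (1 / (2 + beta) * ln (INR (m * i)))) as Hp.
    pose proof (le_INR _ _ (DeltaH_le cs m (m * i) Hm Hv ltac:(lia))) as HD.
    rewrite mult_INR in HD. unfold scaled_maxdeg, Rpower, Rdiv. split.
    - apply Rmult_le_pos; [apply pos_INR | left; apply Rinv_0_lt_compat; auto].
    - rewrite <- Rmult_assoc. apply Rmult_le_compat_r; [left; apply Rinv_0_lt_compat; auto|].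
      pose proof (pos_INR m). nra. }
  rewrite rprod_scal. apply Rmult_le_compat_l; [apply pow_le, pos_INR|].
  eapply Rle_trans.
  - apply rprod_le_sum_pow.
    + destruct is; [congruence | discriminate].
    + apply Forall_forall. intros y Hy. apply in_map_iff in Hy.
      destruct Hy as [i [<- _]]. apply scaled_maxdeg_nonneg, Hb.
  - rewrite length_map, map_map. apply Rle_refl.
Qed.

Theorem corollary7 (beta : R) (hbeta : 0 < beta)
  (Mori : forall k : nat, (0 < k)%nat -> exists Mk : R, forall n : nat, (1 <= n)%nat ->
      expectG beta n (fun cs =>
        ((INR (DeltaG cs n) + beta) / Rpower (INR n) (1 / (2 + beta))) ^ k) <= Mk) :
  forall k m : nat, (0 < k)%nat -> (0 < m)%nat ->
  exists M : R, forall is : list nat,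
    length is = k -> Forall (fun i => (0 < i)%nat) is ->
    expectG beta (m * nmax is)%nat (fun cs =>
      rprod (map (fun i => INR (DeltaH cs m (m * i)) /
                           Rpower (INR (m * i)) (1 / (2 + beta))) is)) <= M.
Proof.
  intros k m Hk Hm. destruct (Mori k Hk) as [Mk HMk].
  exists (INR m ^ k * (INR k * Mk)). intros is Hlen Hpos.
  set (T := (m * nmax is)%nat).
  assert (Hrange : forall i, In i is -> (1 <= m * i <= T)%nat).
  { intros i Hi. rewrite Forall_forall in Hpos. specialize (Hpos i Hi).
    pose proof (nmax_ge is i Hi). unfold T. nia. }
  assert (Hne : is <> []) by (intros ->; simpl in Hlen; lia).
  eapply Rle_trans.
  { unfold expectG. apply (E_mono beta hbeta); [apply valid_nil|]. intros cs Hv Hl.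
    apply product_le_moment_sum; auto; [lra|]. simpl in Hl.
    intros i Hi. specialize (Hrange i Hi). lia. }
  rewrite Hlen, E_scal, E_sum. apply Rmult_le_compat_l; [apply pow_le, pos_INR|].
  rewrite <- Hlen. apply rsum_le_const. intros i Hi.
  change (expectG beta T (fun cs => scaled_maxdeg beta (m * i) cs ^ length is) <= Mk).
  rewrite moment_marginal, Hlen by (auto; apply Hrange, Hi).
  apply HMk. specialize (Hrange i Hi). lia.
Qed.
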